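(* There exists $\varphi_0>\frac{2\pi}{3}$ such that for every $s\in\mathbb C\setminus\{0\}$ with $|\arg s|<\varphi_0$ there exists $\sigma>0$ with $s\in\Omega_\sigma$.
   Context: For $\sigma>0$: $\Omega^1_\sigma=\{s:\Re s\le0,\ \sigma<|\Im s|\}\cup\{s:\Re s>0,\ \sigma<|s|\}$; $\Omega^2_\sigma=\{s:\ \sigma<|s|+\Re s,\ \sigma>\frac{-\Re(s)|s|}{2(|s|+\Re s)}\}$; $\Omega^3_\sigma=\{s\neq0:\ \sigma(|s|-\sigma+\Re s)-(\sigma(1+\frac{\Re s}{|s|})+\frac12\Re s)^2>0\}$; $\Omega_\sigma=\Omega^1_\sigma\cap(\Omega^2_\sigma\cup\Omega^3_\sigma)$. *)

(* complex numbers s = x + i y are represented by the pair of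
   reals (x, y), with Re s = x, Im s = y, |s| = sqrt (x^2 + y^2). *)
From Stdlib Require Import Reals Lra.
Open Scope R_scope.

Definition cmod (x y : R) : R := sqrt (x ^ 2 + y ^ 2).

(* Principal argument arg s in (-PI, PI] (the usual atan2); arg 0 := 0. *)
Definition carg (x y : R) : R :=
  if Rlt_dec 0 x then atan (y / x)
  else if Rlt_dec x 0 then
    (if Rle_dec 0 y then atan (y / x) + PI else atan (y / x) - PI)
  else if Rlt_dec 0 y then PI / 2
  else if Rlt_dec y 0 then - (PI / 2)
  else 0.

Definition Omega1 (sigma x y : R) : Prop :=
  (x <= 0 /\ sigma < Rabs y) \/ (0 < x /\ sigma < cmod x y).

Definition Omega2 (sigma x y : R) : Prop :=
  sigma < cmod x y + x /\
  sigma > (- x * cmod x y) / (2 * (cmod x y + x)).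

Definition Omega3 (sigma x y : R) : Prop :=
  (x, y) <> (0, 0) /\
  sigma * (cmod x y - sigma + x)
    - (sigma * (1 + x / cmod x y) + (1 / 2) * x) ^ 2 > 0.

Definition Omega (sigma x y : R) : Prop :=
  Omega1 sigma x y /\ (Omega2 sigma x y \/ Omega3 sigma x y).

(* Take phi0 = PI - atan (8/5), which exceeds 2 PI / 3 because 8/5 < sqrt 3.
   In the closed right half-plane sigma = |s|/2 lies in Omega^1 and Omega^2.
   In the left half-plane |arg s| < phi0 means |Im s| > (8/5) |Re s|; then
   sigma = (3/10) |s| is below |Im s| and makes the quadratic form defining
   Omega^3 equal to (12 |s|^2 - 18 |s| Re s - 64 (Re s)^2) / 100, which is
   positive since |s| > (sqrt 89 / 5) |Re s|. *)
From Stdlib Require Import Reals Lra Psatz.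
Open Scope R_scope.

Lemma atan_lt_inv u v : atan u < atan v -> u < v.
Proof.
  intro Huv. destruct (Rlt_le_dec u v) as [|[Hvu | ->]]; [easy | |lra].
  pose proof (atan_increasing _ _ Hvu). lra.
Qed.

Lemma atan_8_5_lt_PI3 : atan (8/5) < PI / 3.
Proof.
  assert (H3 : 8/5 < sqrt 3).
  { rewrite <- (sqrt_pow2 (8/5)) by lra. apply sqrt_lt_1_alt; lra. }
  rewrite <- (atan_tan (PI/3)), tan_PI3.
  - now apply atan_increasing.
  - pose proof PI_RGT_0; lra.
Qed.

Lemma cmod_sqr x y : cmod x y ^ 2 = x ^ 2 + y ^ 2.
Proof. apply pow2_sqrt; nra. Qed.

Lemma cmod_pos x y : (x, y) <> (0, 0) -> 0 < cmod x y.
Proof.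
  intro Hne. apply sqrt_lt_R0.
  destruct (Req_dec x 0) as [->|Hx]; [|nra].
  destruct (Req_dec y 0) as [->|Hy]; [contradiction | nra].
Qed.

Lemma cmod_0_l y : cmod 0 y = Rabs y.
Proof. unfold cmod. rewrite <- sqrt_Rsqr_abs. f_equal. unfold Rsqr. ring. Qed.

Lemma carg_left_bound a x y : x < 0 -> Rabs (carg x y) < PI - atan a ->
  a * - x < Rabs y.
Proof.
  intros Hx Harg. unfold carg in Harg.
  destruct (Rlt_dec 0 x); [lra|]. destruct (Rlt_dec x 0); [|lra].
  pose proof (atan_bound (y / x)). pose proof PI_RGT_0.
  assert (Hy : y = y / x * x) by (field; lra).
  destruct (Rle_dec 0 y).
  - rewrite Rabs_right in Harg by lra. rewrite Rabs_right by lra.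
    assert (Hyx : y / x < - a) by (apply atan_lt_inv; rewrite atan_opp; lra).
    rewrite Hy. nra.
  - rewrite Rabs_left in Harg by lra. rewrite Rabs_left by lra.
    assert (Hyx : a < y / x) by (apply atan_lt_inv; lra).
    rewrite Hy. nra.
Qed.

Lemma Omega1_right sigma x y : 0 <= x -> sigma < cmod x y -> Omega1 sigma x y.
Proof.
  intros [Hx | <-] Hsig; [right; lra |].
  left. rewrite cmod_0_l in Hsig. lra.
Qed.

Lemma Omega2_right sigma x y : 0 <= x -> 0 < sigma < cmod x y + x ->
  Omega2 sigma x y.
Proof.
  intros Hx [Hsig Hsig']. split; [lra|].
  assert (Hr : 0 <= cmod x y) by apply sqrt_pos.
  assert (0 <= x * cmod x y / (2 * (cmod x y + x))).
  { apply Rmult_le_pos; [nra | left; apply Rinv_0_lt_compat; lra]. }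
  unfold Rdiv in *. lra.
Qed.

Section SteepLeft.

Variables x y : R.
Hypothesis Hx : x < 0.
Hypothesis Hy : 8/5 * - x < Rabs y.

Let r := cmod x y.

Lemma cmod_sqr_left : r ^ 2 = x ^ 2 + Rabs y ^ 2.
Proof. unfold r. rewrite cmod_sqr, <- (pow2_abs y). reflexivity. Qed.

Lemma cmod_pos_left : 0 < r.
Proof. apply cmod_pos. intros [= -> _]. lra. Qed.

Lemma Omega1_steep_left : Omega1 (3/10 * r) x y.
Proof.
  left. split; [lra|].
  pose proof cmod_sqr_left. pose proof cmod_pos_left. nra.
Qed.

Lemma Omega3_steep_left : Omega3 (3/10 * r) x y.
Proof.
  pose proof cmod_sqr_left as Hr2. pose proof cmod_pos_left as Hr.
  split; [intros [= -> _]; lra |]. fold r.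
  replace (3/10 * r * (1 + x / r)) with (3/10 * (r + x)) by (field; lra).
  assert (Hr' : r ^ 2 > 89/25 * x ^ 2) by nra.
  assert (Hrx : - (r * x) > 9/5 * x ^ 2) by nra.
  nra.
Qed.

End SteepLeft.

Theorem mainTheorem10 :
  exists phi0 : R, 2 * PI / 3 < phi0 /\
    forall x y : R, (x, y) <> (0, 0) ->
      Rabs (carg x y) < phi0 ->
      exists sigma : R, 0 < sigma /\ Omega sigma x y.
Proof.
  exists (PI - atan (8/5)). split; [pose proof atan_8_5_lt_PI3; lra |].
  intros x y Hne Harg.
  pose proof (cmod_pos x y Hne) as Hr.
  destruct (Rlt_le_dec x 0) as [Hx | Hx].
  - pose proof (carg_left_bound _ _ _ Hx Harg) as Hy.
    exists (3/10 * cmod x y). split; [lra|].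
    split; [apply Omega1_steep_left | right; apply Omega3_steep_left]; assumption.
  - exists (cmod x y / 2). split; [lra|].
    split; [apply Omega1_right | left; apply Omega2_right]; lra.
Qed.
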